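(* For every dynamic network congestion game $(\mathcal A,n)$ and every vector $\vec\gamma=(\gamma_i)_{i\in[n]}$ of reals, the cost of a shortest path in the graph $\mathcal G^{\vec\gamma}_{NE}$ from $(c_{\mathsf{src}},\infty^n)$ to some vertex of the form $(c_{\mathsf{tgt}},b)$ equals the $\vec\gamma$-weighted social cost of a $\vec\gamma$-minimal Nash equilibrium of $(\mathcal A,n)$.
   Context: An arena is $\mathcal A=(V,E,\mathsf{src},\mathsf{tgt})$ with $V$ finite and $E$ a partial function from $V\times V$ to non-decreasing piecewise-affine functions $\mathbb N\to\mathbb N$ (edge $e$ has cost function $\ell_e$); $\mathsf{tgt}$ has only a self-loop of constant cost $0$ and is reachable from every state. In the dynamic NCG $(\mathcal A,n)$ with players $[n]$, configurations are maps $c:[n]\to V$; $c_{\mathsf{src}}$, $c_{\mathsf{tgt}}$ map everyone to $\mathsf{src}$, resp. $\mathsf{tgt}$. From $c$, a move vector $(e_i)_i$ ($e_i$ an edge leaving $c(i)$) yields the transition $(c,w,c')$ where $c'(i)$ is the target of $e_i$ and $w(i)=\ell_{e_i}(u_i)$, $u_i$ being the number of $j$ with $e_j=e_i$; write $c\Rightarrow c'$ and $\mathrm{cost}_i(c,c')=w(i)$. Let $C=V^{[n]}$ and $T$ the set of these transitions. Strategies map finite histories from $c_{\mathsf{src}}$ to edges leaving the player's current position; $\mathrm{cost}_i(\sigma)$ is player $i$'s total payment along the outcome of profile $\sigma$ until reaching $\mathsf{tgt}$; a Nash equilibrium is a profile in which no player can lower their cost by a unilateral change. The $\vec\gamma$-weighted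 social cost of $\sigma$ is $\sum_k\gamma_k\mathrm{cost}_k(\sigma)$, and a $\vec\gamma$-minimal Nash equilibrium is one with the least $\vec\gamma$-weighted social cost among Nash equilibria. Let $\mathrm{dev}_i(c,c')=\{c''\mid c\Rightarrow c'',\ c''(j)=c'(j)\ \forall j\ne i\}$ and $\mathrm{val}_{i,c}=\sup_{\sigma_{-i}}\inf_{\sigma_i}\mathrm{cost}_i((\sigma_{-i},\sigma_i),c)$ (game started from $c$). Let $\kappa=\max_{e\in E}\ell_e(n)$ and $Y=|V|\cdot\kappa$. The weighted graph $\mathcal G^{\vec\gamma}_{NE}$ has vertex set $C\times(\{1,\dots,Y\}\cup\{0,\infty\})^n$ and an edge $((c,b),z,(c',b'))$ iff there is $(c,w,c')\in T$ with $z=\vec\gamma\cdot w$ and, for all $i\in[n]$, $b'_i=\min\big(b_i-w_i,\ \min_{c''\in\mathrm{dev}_i(c,c')}\mathrm{cost}_i(c,c'')+\mathrm{val}_{i,c''}-w_i\big)$ (so in particular each $b'_i$ must be nonnegative); the cost of a path is the sum of its edge weights $z$. *)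

From HB Require Import structures.
From mathcomp Require Import all_boot all_order all_algebra.
From mathcomp Require Import boolp classical_sets reals constructive_ereal ereal.

Set Implicit Arguments.
Unset Strict Implicit.
Unset Printing Implicit Defensive.
Import Order.TTheory GRing.Theory Num.Theory.

Local Open Scope ring_scope.
Local Open Scope classical_set_scope.

(* A function N -> N is piecewise affine (with finitely many pieces) iff its
   second difference vanishes from some point on. *)
Definition piecewise_affine (f : nat -> nat) : Prop :=
  exists N : nat, forall x : nat, (N <= x)%N -> (f x.+2 + f x = (f x.+1).*2)%N.

Record arena := Arena {
  state : finType;
  edge : state -> state -> option (nat -> nat);
  src : state;
  tgt : state;
  edge_mono : forall u v l, edge u v = Some l -> {homo l : x y / (x <= y)%N};
  edge_pwa : forall u v l, edge u v = Some l -> piecewise_affine l;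
  tgt_only_loop : forall v, isSome (edge tgt v) = (v == tgt);
  tgt_loop_zero : forall l, edge tgt tgt = Some l -> forall x, l x = 0%N;
  tgt_reachable : forall v, connect (fun x y => isSome (edge x y)) v tgt
}.

Section Game.
Variables (A : arena) (n : nat).
Local Notation V := (state A).

Definition config := {ffun 'I_n -> V}.
Definition c_src : config := [ffun => src A].
Definition c_tgt : config := [ffun => tgt A].

Definition lcost (u v : V) (x : nat) : nat :=
  if edge u v is Some l then l x else 0%N.

(* c => c' : every player i moves along the edge (c i, c' i)
   (edges are determined by their endpoints, so c' determines the move vector) *)
Definition step (c c' : config) : bool :=
  [forall i, isSome (edge (c i) (c' i))].

Definition load (c c' : config) (i : 'I_n) : nat :=
  #|[set j | (c j == c i) && (c' j == c' i)]|.

Definition tcost (c c' : config) (i : 'I_n) : nat :=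
  lcost (c i) (c' i) (load c c' i).

Definition dev (i : 'I_n) (c c' : config) : {set config} :=
  [set c'' | step c c'' && [forall j, (j != i) ==> (c'' j == c' j)]].

Definition history := seq config.
Definition strategy := history -> V.
Definition profile := 'I_n -> strategy.

Definition valid_strategy (i : 'I_n) (s : strategy) : Prop :=
  forall (x : config) (h : seq config),
    isSome (edge ((last x h) i) (s (x :: h))).

Definition valid_profile (sigma : profile) : Prop :=
  forall i, valid_strategy i (sigma i).

Definition upd (sigma : profile) (i : 'I_n) (s : strategy) : profile :=
  fun j => if j == i then s else sigma j.

Fixpoint hist (sigma : profile) (c : config) (k : nat) : history :=
  if k is k'.+1 then
    let h := hist sigma c k' in rcons h [ffun i => sigma i h]
  else [:: c].

Definition play (sigma : profile) (c : config) (k : nat) : config :=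
  last c (hist sigma c k).

Variable R : realType.

Definition cost (i : 'I_n) (sigma : profile) (c : config) : \bar R :=
  match pselect (exists k, play sigma c k i == tgt A) with
  | left P =>
      ((\sum_(j < @ex_minn (fun k => play sigma c k i == tgt A) P)
          tcost (play sigma c j) (play sigma c j.+1) i)%N%:R)%:E
  | right _ => +oo%E
  end.

Definition NashEq (sigma : profile) : Prop :=
  valid_profile sigma /\
  forall i s, valid_strategy i s ->
    (cost i sigma c_src <= cost i (upd sigma i s) c_src)%E.

Definition social_cost (gamma : 'I_n -> R) (sigma : profile) : \bar R :=
  (\sum_(k < n) ((gamma k)%:E * cost k sigma c_src))%E.

Definition minimal_NE (gamma : 'I_n -> R) (sigma : profile) : Prop :=
  NashEq sigma /\
  forall sigma', NashEq sigma' ->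
    (social_cost gamma sigma <= social_cost gamma sigma')%E.

Definition val (i : 'I_n) (c : config) : \bar R :=
  ereal_sup [set ereal_inf [set cost i (upd sigma i s) c | s in [set s | valid_strategy i s]]
            | sigma in [set sigma : profile | forall j, j != i -> valid_strategy j (sigma j)]].

Definition kappa : nat := (\max_(u : V) \max_(v : V) lcost u v n)%N.
Definition Ybound : nat := (#|V| * kappa)%N.

Definition inB (x : \bar R) : Prop :=
  x = +oo%E \/ exists k : nat, (k <= Ybound)%N /\ x = (k%:R)%:E.

Definition vertex := (config * ('I_n -> \bar R))%type.

Definition Gedge (gamma : 'I_n -> R) (x : vertex) (z : R) (y : vertex) : Prop :=
  [/\ forall i, inB (x.2 i),
      forall i, inB (y.2 i),
      step x.1 y.1,
      z = \sum_(i < n) gamma i * (tcost x.1 y.1 i)%:R &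
      forall i, y.2 i =
        Order.min (x.2 i - ((tcost x.1 y.1 i)%:R)%:E)%E
          (\big[Order.min/+oo%E]_(c'' in dev i x.1 y.1)
             (((tcost x.1 c'' i)%:R)%:E + val i c'' - ((tcost x.1 y.1 i)%:R)%:E)%E)].

Inductive gpath (gamma : 'I_n -> R) : vertex -> vertex -> R -> Prop :=
| gpath_nil x : gpath gamma x x 0
| gpath_cons x y t z p : Gedge gamma x z y -> gpath gamma y t p -> gpath gamma x t (z + p).

End Game.

From Pilot Require Import Defs.
From HB Require Import structures.
From mathcomp Require Import all_boot all_order all_algebra.
From mathcomp Require Import boolp classical_sets reals constructive_ereal ereal.
From mathcomp Require Import zify.
Import Order.TTheory GRing.Theory Num.Theory.
Local Open Scope ring_scope.

Set Implicit Arguments.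
Unset Strict Implicit.
Unset Printing Implicit Defensive.

(* Costs of a Nash equilibrium only depend on its outcome, and a play is the outcome of
   some Nash equilibrium iff at every step each player pays, until she reaches tgt, at most
   what she could secure by deviating there to some c'' and then facing the coalition that
   holds her to val_{i,c''}: the cost of the deviating move plus val_{i,c''}.  The second
   component of a vertex of G_NE records the slack in these constraints, so the outcomes of
   Nash equilibria are exactly the paths from (c_src, oo^n) to c_tgt, with matching weights;
   a path is realised by the profile that follows it and punishes the first deviator.
   Moving along shortest paths to tgt bounds every equilibrium cost by Y, so only finitely
   many social costs occur, and Rosenthal's potential provides an equilibrium; hence a
   gamma-minimal equilibrium exists and its social cost is the length of a shortest path. *)

Lemma find_iota (p : pred nat) N d : (d < N)%N -> p d ->
  (forall t, (t < d)%N -> ~~ p t) -> find p (iota 0 N) = d.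
Proof.
move=> dN pd Hlt; rewrite -(subnKC dN) addSn -addnS iotaD find_cat /= add0n pd.
have -> : has p (iota 0 d) = false.
  by apply/hasPn => t; rewrite mem_iota => /andP[_ td]; apply: Hlt.
by rewrite size_iota addn0.
Qed.

Lemma last_drop (T : Type) (s : seq T) d x0 : (d < size s)%N ->
  last x0 (drop d s) = last x0 s.
Proof. by move=> ds; rewrite -{2}(cat_take_drop d s) last_cat (drop_nth x0 ds). Qed.

Lemma mem_classic_set (T : finType) (b : pred T) x : (x \in [set y | b y]%classic) = b x.
Proof. by apply/idP/idP; rewrite inE. Qed.

Section DynamicNCG.
Variables (R : realType) (A : arena) (n : nat).
Local Notation V := (state A).
Local Notation config := (config A n).
Local Notation profile := (profile A n).
Local Notation strategy := (strategy A n).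
Local Notation history := (history A n).
Local Notation tgt := (tgt A).
Local Notation c_src := (c_src A n).
Local Notation c_tgt := (c_tgt A n).
Local Notation cost := (cost R).
Local Notation value := (Defs.val R).
Local Notation Y := (Ybound A n).
Implicit Types (sigma : profile) (c : config) (i : 'I_n) (rho : nat -> config).

Definition arc : rel V := fun u v => isSome (edge u v).

Lemma arc_tgt v : arc tgt v -> v = tgt.
Proof. by rewrite /arc tgt_only_loop => /eqP. Qed.

Lemma arc_tgt_tgt : arc tgt tgt.
Proof. by rewrite /arc tgt_only_loop. Qed.

Lemma lcost_tgt x : lcost tgt tgt x = 0%N.
Proof.
by rewrite /lcost; case E: (edge tgt tgt) => [l|] //; apply: tgt_loop_zero E x.
Qed.

Lemma tgt_absorbing (f : nat -> V) k m :
  (forall t, arc (f t) (f t.+1)) -> f k = tgt -> (k <= m)%N -> f m = tgt.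
Proof.
move=> Hf Hk /subnK <-; elim: (m - k)%N => [|d IH] //=.
by rewrite addSn; apply: arc_tgt; rewrite -IH; apply: Hf.
Qed.

Lemma load_le c c' i : (load c c' i <= n)%N.
Proof. by rewrite /load -[X in (_ <= X)%N]card_ord max_card. Qed.

Lemma tcost_le_kappa c c' i : (tcost c c' i <= kappa A n)%N.
Proof.
rewrite /tcost /lcost; case E: (edge (c i) (c' i)) => [l|] //.
apply: leq_trans (edge_mono E (load_le c c' i)) _.
apply: leq_trans _ (@leq_bigmax _ (fun u => \max_(v : V) lcost u v n) (c i)).
by apply: leq_trans _ (@leq_bigmax _ (fun v => lcost (c i) v n) (c' i)); rewrite /lcost E.
Qed.

(** * Shortest routes to tgt *)

Fixpoint reach_within (k : nat) (v : V) : bool :=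
  (v == tgt) || (if k is k'.+1 then [exists w, arc v w && reach_within k' w] else false).

Lemma reach_withinS k v : reach_within k v -> reach_within k.+1 v.
Proof.
elim: k v => [|k IH] v /=; first by rewrite orbF => ->.
case/orP => [->//|/existsP[w /andP[e r]]].
by apply/orP; right; apply/existsP; exists w; rewrite e /=; exact: IH.
Qed.

Lemma reach_within_le k m v : (k <= m)%N -> reach_within k v -> reach_within m v.
Proof. by move=> /subnK <-; elim: (m - k)%N => // d IH /IH /reach_withinS. Qed.

Lemma reach_within_path p v : path arc v p -> last v p = tgt -> reach_within (size p) v.
Proof.
elim: p v => [|w p IH] v /=; first by move=> _ ->; rewrite eqxx.
by case/andP => e pa l; apply/orP; right; apply/existsP; exists w; rewrite e IH.
Qed.

Lemma reach_within_card v : reach_within #|V| v.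
Proof.
have /connectP[p pa lp] := tgt_reachable v.
case: (shortenP pa) lp => p' pa' u _ lp'.
have sz : (size p' < #|V|)%N.
  by have := max_card (mem (v :: p')); rewrite (card_uniqP u).
exact: reach_within_le (ltnW sz) (reach_within_path pa' (esym lp')).
Qed.

Definition dist_tgt (v : V) : nat := ex_minn (ex_intro (reach_within^~ v) _ (reach_within_card v)).

Lemma dist_tgt_reach v : reach_within (dist_tgt v) v.
Proof. by rewrite /dist_tgt; case: ex_minnP. Qed.

Lemma dist_tgt_min v k : reach_within k v -> (dist_tgt v <= k)%N.
Proof. by rewrite /dist_tgt; case: ex_minnP => m _ H /H. Qed.

Lemma dist_tgt_le_card v : (dist_tgt v <= #|V|)%N.
Proof. exact: dist_tgt_min (reach_within_card v). Qed.

Lemma dist_tgt_eq0 v : dist_tgt v = 0%N -> v = tgt.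
Proof. by move=> H; have := dist_tgt_reach v; rewrite H /= orbF => /eqP. Qed.

Lemma dist_tgt_tgt : dist_tgt tgt = 0%N.
Proof. by apply/eqP; rewrite -leqn0; apply: dist_tgt_min; rewrite /= eqxx. Qed.

Definition toward_tgt (v : V) : V :=
  if v == tgt then tgt else odflt tgt [pick w | arc v w && reach_within (dist_tgt v).-1 w].

Lemma toward_tgt_spec v : v != tgt ->
  arc v (toward_tgt v) /\ (dist_tgt (toward_tgt v) < dist_tgt v)%N.
Proof.
move=> Hv; rewrite /toward_tgt (negbTE Hv).
have := dist_tgt_reach v; case E: (dist_tgt v) => [|k] /=.
  by rewrite orbF => /eqP Ev; rewrite Ev eqxx in Hv.
case/orP => [/eqP Ev|/existsP[w Hw]]; first by rewrite Ev eqxx in Hv.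
case: pickP => [w' /andP[e r]|/(_ w)]; last by rewrite Hw.
by split => //; apply: leq_ltn_trans (dist_tgt_min r) _.
Qed.

Lemma arc_toward_tgt v : arc v (toward_tgt v).
Proof.
have [->|Hv] := eqVneq v tgt; last by case: (toward_tgt_spec Hv).
by rewrite /toward_tgt eqxx; exact: arc_tgt_tgt.
Qed.

Lemma dist_toward_tgt v : (dist_tgt (toward_tgt v) <= (dist_tgt v).-1)%N.
Proof.
have [->|Hv] := eqVneq v tgt; last by case: (toward_tgt_spec Hv) => _; lia.
by rewrite /toward_tgt eqxx dist_tgt_tgt.
Qed.

Lemma iter_toward_tgt (f : nat -> V) :
  (forall t, f t.+1 = toward_tgt (f t)) -> f #|V| = tgt.
Proof.
move=> Hf; have dist_f t : (dist_tgt (f t) <= dist_tgt (f 0%N) - t)%N.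
  elim: t => [|t IH]; first by rewrite subn0.
  by rewrite Hf; apply: leq_trans (dist_toward_tgt _) _; lia.
by apply: dist_tgt_eq0; have := dist_f #|V|; have := dist_tgt_le_card (f 0%N); lia.
Qed.

(** * Runs and their costs *)

Definition follows i rho := forall t, arc (rho t i) (rho t.+1 i).

Definition stage_cost rho t i := tcost (rho t) (rho t.+1) i.

Definition cost_between rho i a b := (\sum_(a <= t < b) stage_cost rho t i)%N.

Definition run_cost rho i : \bar R :=
  match pselect (exists k, rho k i == tgt) with
  | left P => ((\sum_(j < ex_minn P) tcost (rho j) (rho j.+1) i)%N%:R)%:E
  | right _ => +oo%E
  end.

Lemma cost_play i sigma c : cost i sigma c = run_cost (play sigma c) i.
Proof. by []. Qed.

Lemma follows_tgt rho i k m : follows i rho -> rho k i = tgt -> (k <= m)%N -> rho m i = tgt.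
Proof. exact: tgt_absorbing. Qed.

Lemma cost_between_split rho i a b e : (a <= b <= e)%N ->
  cost_between rho i a e = (cost_between rho i a b + cost_between rho i b e)%N.
Proof. by move=> /andP[ab be]; rewrite /cost_between (big_cat_nat ab be). Qed.

Lemma cost_betweenSr rho i a b : (a <= b)%N ->
  cost_between rho i a b.+1 = (cost_between rho i a b + stage_cost rho b i)%N.
Proof. by move=> ab; rewrite /cost_between big_nat_recr. Qed.

Lemma eq_cost_between rho rho' i a b : (forall t, (t <= b)%N -> rho t = rho' t) ->
  cost_between rho i a b = cost_between rho' i a b.
Proof.
move=> H; apply: eq_big_nat => t /andP[_ tb].
by rewrite /stage_cost !H // ltnW.
Qed.

Lemma cost_between_shift rho rho' i m a b : (forall t, rho (m + t)%N = rho' t) ->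
  cost_between rho i (m + a) (m + b) = cost_between rho' i a b.
Proof.
move=> Hs; rewrite /cost_between addnC big_addn addKn.
by apply: eq_bigr => t _; rewrite /stage_cost addnC Hs -addnS Hs.
Qed.

Lemma run_cost_tgt rho i K : follows i rho -> rho K i = tgt ->
  run_cost rho i = ((cost_between rho i 0 K)%:R)%:E.
Proof.
move=> Hv HK; rewrite /run_cost; case: pselect => [P|nP]; last first.
  by exfalso; apply: nP; exists K; apply/eqP.
case: ex_minnP => m /eqP Hm Hmin; have mK : (m <= K)%N by apply/Hmin/eqP.
rewrite (@cost_between_split _ _ 0 m) // [X in (_ + X)%N]big1_seq ?addn0.
  by rewrite /cost_between big_mkord.
move=> t /andP[_]; rewrite mem_index_iota => /andP[mt _].
by rewrite /stage_cost /tcost !(follows_tgt Hv Hm) ?lcost_tgt // leqW.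
Qed.

Lemma run_cost_never rho i : (forall K, rho K i != tgt) -> run_cost rho i = +oo%E.
Proof. by move=> H; rewrite /run_cost; case: pselect => // -[k Hk]; move: (H k); rewrite Hk. Qed.

Lemma run_cost_shift rho rho' i m : follows i rho -> (forall t, rho (m + t)%N = rho' t) ->
  run_cost rho i = (((cost_between rho i 0 m)%:R)%:E + run_cost rho' i)%E.
Proof.
move=> Hv Hs; have Hv' : follows i rho' by move=> t; rewrite -!Hs addnS; apply: Hv.
case: (pselect (exists K, rho' K i == tgt)) => [[K /eqP HK]|nK].
  rewrite (run_cost_tgt Hv' HK) (@run_cost_tgt rho i (m + K)) ?Hs // -EFinD -natrD.
  rewrite (@cost_between_split _ _ 0 m) ?leq_addr //.
  by rewrite -(cost_between_shift i 0 K Hs) addn0.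
have never' K : rho' K i != tgt by apply/negP => HK; apply: nK; exists K.
rewrite (run_cost_never never') run_cost_never ?addey // => K; apply/negP => /eqP HK.
by move: (never' K); rewrite -Hs (follows_tgt Hv HK) ?eqxx ?leq_addl.
Qed.

Lemma size_hist sigma c k : size (hist sigma c k) = k.+1.
Proof. by elim: k => //= k IH; rewrite size_rcons IH. Qed.

Lemma hist_head sigma c k : exists h, hist sigma c k = c :: h.
Proof.
elim: k => [|k [h IH]] /=; first by exists [::].
by rewrite IH; exists (rcons h [ffun j => sigma j (c :: h)]).
Qed.

Lemma playS sigma c k : play sigma c k.+1 = [ffun j => sigma j (hist sigma c k)].
Proof. by rewrite /play /= last_rcons. Qed.

Lemma last_hist sigma c k x : last x (hist sigma c k) = play sigma c k.
Proof. by rewrite /play; have [h ->] := hist_head sigma c k. Qed.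

Lemma hist_mkseq sigma c k : hist sigma c k = mkseq (play sigma c) k.+1.
Proof.
elim: k => // k IH.
have -> : hist sigma c k.+1 = rcons (hist sigma c k) (play sigma c k.+1) by rewrite playS.
by rewrite IH [in RHS]mkseqS.
Qed.

Lemma play_follows sigma c i : valid_strategy i (sigma i) -> follows i (play sigma c).
Proof.
move=> Hv t; rewrite playS ffunE; have [h Eh] := hist_head sigma c t.
by have := Hv c h; rewrite -Eh /arc -(last_hist sigma c t c) Eh.
Qed.

Lemma valid_strategy_prefix j (s : strategy) (pre : history) :
  valid_strategy j s -> valid_strategy j (fun h => s (pre ++ h)).
Proof.
case: pre => [|y p] Hs x h //=.
by have := Hs y (p ++ x :: h); rewrite last_cat.
Qed.

Lemma hist_continue sigma sigma' c pre d m :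
  hist sigma c m = rcons pre d ->
  (forall j x h, sigma' j (x :: h) = sigma j (pre ++ x :: h)) ->
  forall t, hist sigma c (m + t) = pre ++ hist sigma' d t.
Proof.
move=> Hm Hs; elim=> [|t IH]; first by rewrite addn0 Hm cats1.
rewrite addnS /= IH rcons_cat; congr (_ ++ _); congr rcons.
by apply/ffunP => j; rewrite !ffunE; have [h ->] := hist_head sigma' d t; rewrite Hs.
Qed.

Lemma play_continue sigma sigma' c pre d m :
  hist sigma c m = rcons pre d ->
  (forall j x h, sigma' j (x :: h) = sigma j (pre ++ x :: h)) ->
  forall t, play sigma c (m + t) = play sigma' d t.
Proof. by move=> Hm Hs t; rewrite /play (hist_continue Hm Hs) last_cat last_hist. Qed.

Lemma cost_continue i sigma sigma' c pre d m : valid_strategy i (sigma i) ->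
  hist sigma c m = rcons pre d ->
  (forall j x h, sigma' j (x :: h) = sigma j (pre ++ x :: h)) ->
  cost i sigma c = (((cost_between (play sigma c) i 0 m)%:R)%:E + cost i sigma' d)%E.
Proof.
by move=> Hv Hm Hs; rewrite !cost_play (run_cost_shift (play_follows _ Hv) (play_continue Hm Hs)).
Qed.

Lemma eq_cost sigma sigma' c i : (forall j h, sigma j (c :: h) = sigma' j (c :: h)) ->
  cost i sigma c = cost i sigma' c.
Proof.
move=> H; rewrite !cost_play; congr run_cost; apply: funext => t.
rewrite /play; congr last; elim: t => // t IH /=; rewrite IH; congr rcons.
by apply/ffunP => j; rewrite !ffunE; have [h ->] := hist_head sigma' c t.
Qed.

Definition to_tgt i : strategy := fun h => toward_tgt (last c_src h i).

Lemma to_tgt_valid i : valid_strategy i (to_tgt i).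
Proof. by move=> x h; apply: arc_toward_tgt. Qed.

Lemma cost_to_tgt sigma c i :
  exists m, cost i (upd sigma i (to_tgt i)) c = (m%:R)%:E /\ (m <= Y)%N.
Proof.
set rho := play (upd sigma i (to_tgt i)) c.
have Hv : follows i rho by apply: play_follows; rewrite /upd eqxx; apply: to_tgt_valid.
have Hn t : rho t.+1 i = toward_tgt (rho t i).
  by rewrite /rho playS ffunE /upd eqxx /to_tgt last_hist.
exists (cost_between rho i 0 #|V|); split.
  by rewrite cost_play (run_cost_tgt Hv (iter_toward_tgt Hn)).
rewrite /Ybound -[X in (X * _)%N]subn0 -sum_nat_const_nat.
by apply: leq_sum => t _; apply: tcost_le_kappa.
Qed.

(** * Values and punishing coalitions *)

Definition others_valid i sigma := forall j, j != i -> valid_strategy j (sigma j).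

Definition responses i sigma c : set (\bar R) :=
  [set cost i (upd sigma i s) c | s in [set s | valid_strategy i s]]%classic.

Lemma cost_nat_or_oo i sigma c :
  cost i sigma c = +oo%E \/ exists m : nat, cost i sigma c = (m%:R)%:E.
Proof. by rewrite /cost; case: pselect => [P|nP]; [right; eexists | left]. Qed.

Lemma best_response i sigma c : exists s m,
  [/\ valid_strategy i s, cost i (upd sigma i s) c = (m%:R)%:E,
      (m <= Y)%N & ereal_inf (responses i sigma c) = (m%:R)%:E].
Proof.
pose P m := `[< exists s, valid_strategy i s /\ cost i (upd sigma i s) c = (m%:R)%:E >].
have [m0 [H0 Hb]] := cost_to_tgt sigma c i.
have P0 : P m0 by apply/asboolP; exists (to_tgt i); split => //; apply: to_tgt_valid.
case: (ex_minnP (ex_intro P m0 P0)) => m /asboolP [s [vs Hs]] Hmin.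
exists s, m; split => //; first exact: leq_trans (Hmin m0 P0) Hb.
apply/eqP; rewrite eq_le; apply/andP; split; first by apply: ereal_inf_lbound; exists s.
apply: le_ereal_inf_tmp => _ [s' vs' <-].
case: (cost_nat_or_oo i (upd sigma i s') c) => [->|[m' Hm']]; first exact: leey.
by rewrite Hm' lee_fin ler_nat; apply/Hmin/asboolP; exists s'.
Qed.

Lemma val_attained i c : exists pi M,
  [/\ others_valid i pi, (M <= Y)%N, value i c = (M%:R)%:E
    & ereal_inf (responses i pi c) = (M%:R)%:E].
Proof.
pose Q M := `[< exists pi, others_valid i pi /\ ereal_inf (responses i pi c) = (M%:R)%:E >].
have Qb M : Q M -> (M <= Y)%N.
  move=> /asboolP [pi [_ H]]; have [s [m [_ _ Hb Hi]]] := best_response i pi c.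
  by move: H; rewrite Hi => /eqP; rewrite eqe eqr_nat => /eqP <-.
have exQ : exists M, Q M.
  have [s [m [_ _ _ Hi]]] := best_response i to_tgt c.
  by exists m; apply/asboolP; exists to_tgt; split => // j _; apply: to_tgt_valid.
case: (ex_maxnP exQ Qb) => M QM Hmax; have /asboolP [pi [vpi Hpi]] := QM.
exists pi, M; split => //; first exact: Qb.
apply/eqP; rewrite eq_le; apply/andP; split; last by apply: ereal_sup_ubound; exists pi.
apply: ge_ereal_sup => _ [pi' vpi' <-].
have [s [m [_ _ _ Hi]]] := best_response i pi' c.
by rewrite Hi lee_fin ler_nat; apply/Hmax/asboolP; exists pi'.
Qed.

Lemma val_nat i c : exists M, value i c = (M%:R)%:E /\ (M <= Y)%N.
Proof. by have [pi [M [_ HM Hv _]]] := val_attained i c; exists M. Qed.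

Lemma response_le_val i c sigma : others_valid i sigma -> exists s m,
  [/\ valid_strategy i s, cost i (upd sigma i s) c = (m%:R)%:E
    & ((m%:R)%:E <= value i c)%E].
Proof.
move=> vs; have [s [m [vs' Hc _ Hi]]] := best_response i sigma c.
by exists s, m; split => //; rewrite -Hi; apply: ereal_sup_ubound; exists sigma.
Qed.

Lemma punishment i c : exists pi, others_valid i pi /\
  forall s, valid_strategy i s -> (value i c <= cost i (upd pi i s) c)%E.
Proof.
have [pi [M [vpi _ Hv Hi]]] := val_attained i c.
by exists pi; split => // s vs; rewrite Hv -Hi; apply: ereal_inf_lbound; exists s.
Qed.

Definition punisher i c : profile := sval (cid (punishment i c)).

Lemma punisherP i c : others_valid i (punisher i c) /\
  forall s, valid_strategy i s -> (value i c <= cost i (upd (punisher i c) i s) c)%E.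
Proof. exact: (svalP (cid (punishment i c))). Qed.

(** * From Nash equilibria to paths of G_NE *)

Lemma dev_step i c c' c'' : c'' \in dev i c c' -> step c c''.
Proof. by rewrite inE => /andP[]. Qed.

Lemma dev_others i c c' c'' j : c'' \in dev i c c' -> j != i -> c'' j = c' j.
Proof. by rewrite inE => /andP[_ /forallP /(_ j) /implyP H] /H /eqP. Qed.

Lemma play_rcons_hist sigma sigma' c k c' :
  hist sigma c k.+1 = rcons (hist sigma' c k) c' ->
  (forall t, (t <= k)%N -> play sigma c t = play sigma' c t) /\ play sigma c k.+1 = c'.
Proof.
rewrite !hist_mkseq => E; split; last by rewrite /play !hist_mkseq E last_rcons.
move=> t tk; have tk2 : (t < k.+2)%N by lia.
rewrite -(nth_mkseq c (play sigma c) tk2) E.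
by rewrite nth_rcons size_mkseq ltnS tk nth_mkseq.
Qed.

Lemma cost_between_rcons_hist sigma sigma' k c' i :
  hist sigma c_src k.+1 = rcons (hist sigma' c_src k) c' ->
  cost_between (play sigma c_src) i 0 k.+1 =
    (cost_between (play sigma' c_src) i 0 k + tcost (play sigma' c_src k) c' i)%N.
Proof.
move=> /play_rcons_hist [Heq Hk]; rewrite cost_betweenSr // (eq_cost_between i 0 Heq).
by rewrite /stage_cost Heq ?Hk.
Qed.

Lemma NE_cost_le sigma i : NashEq R sigma ->
  exists m, cost i sigma c_src = (m%:R)%:E /\ (m <= Y)%N.
Proof.
move=> [_ HNE]; have [m [Hm HmY]] := cost_to_tgt sigma c_src i.
have := HNE i _ (to_tgt_valid i); rewrite Hm.
case: (cost_nat_or_oo i sigma c_src) => [->|[m' ->]]; first by rewrite leye_eq.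
by rewrite lee_fin ler_nat => m'm; exists m'; split => //; apply: leq_trans HmY.
Qed.

Lemma NE_reaches_tgt sigma : NashEq R sigma ->
  exists T, forall i, play sigma c_src T i = tgt.
Proof.
move=> HNE; have HK i : exists K, play sigma c_src K i == tgt.
  case: (pselect (exists K, play sigma c_src K i == tgt)) => // nK.
  have [m []] := NE_cost_le i HNE; rewrite cost_play run_cost_never // => K.
  by apply/negP => HK; apply: nK; exists K.
exists (\max_(i < n) xchoose (HK i))%N => i.
apply: (follows_tgt (play_follows _ (proj1 HNE i)) (eqP (xchooseP (HK i)))).
exact: (@leq_bigmax _ (fun i => xchoose (HK i)) i).
Qed.

Definition deviate (pre : history) (v : V) (s s0 : strategy) : strategy := fun h =>
  if h == pre then v else if take (size pre) h == pre then s (drop (size pre) h) else s0 h.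

Lemma deviate_valid i sigma k v s : valid_strategy i (sigma i) -> valid_strategy i s ->
  arc (play sigma c_src k i) v ->
  valid_strategy i (deviate (hist sigma c_src k) v s (sigma i)).
Proof.
move=> Hv vs Hk x h; rewrite /deviate; set pre := hist _ _ _.
have last_xh : last x h = last c_src (x :: h) by [].
case: ifP => [/eqP E|/negbT ne]; first by rewrite last_xh E last_hist.
case: ifP => [/eqP E|_]; last exact: Hv.
have := cat_take_drop (size pre) (x :: h); rewrite E.
case Ed: (drop (size pre) (x :: h)) => [|y h'] E2; first by rewrite -E2 cats0 eqxx in ne.
by have := vs y h'; rewrite last_xh -E2 last_cat.
Qed.

Lemma hist_deviate i sigma k c'' s :
  (forall j, j != i -> c'' j = play sigma c_src k.+1 j) ->
  hist (upd sigma i (deviate (hist sigma c_src k) (c'' i) s (sigma i))) c_src k.+1 =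
    rcons (hist sigma c_src k) c''.
Proof.
move=> Hothers; set pre := hist sigma c_src k; set sigma2 := upd sigma i _.
have before t : (t <= k)%N -> hist sigma2 c_src t = hist sigma c_src t.
  elim: t => // t IH tk /=; rewrite IH ?(ltnW tk) //; congr rcons.
  apply/ffunP => j; rewrite !ffunE /sigma2 /upd; case: eqP => // ->.
  have ne : hist sigma c_src t != pre.
    by apply: contraTneq tk => /(congr1 size); rewrite !size_hist => -[->]; rewrite ltnn.
  by rewrite /deviate (negbTE ne) take_oversize ?(negbTE ne) // !size_hist ltnW.
rewrite /= before //; congr rcons; apply/ffunP => j; rewrite ffunE /sigma2 /upd.
case: eqP => [->|/eqP ji]; first by rewrite /deviate eqxx.
by rewrite Hothers // playS ffunE.
Qed.

Lemma NE_deviation_bound sigma i k T c'' : NashEq R sigma ->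
  let rho := play sigma c_src in
  c'' \in dev i (rho k) (rho k.+1) -> (k <= T)%N -> rho T i = tgt ->
  (((cost_between rho i k T)%:R)%:E <= ((tcost (rho k) c'' i)%:R)%:E + value i c'')%E.
Proof.
move=> [Hv HNE] rho Hdev kT HT; set pre := hist sigma c_src k.
pose sigma' : profile := fun j h => sigma j (pre ++ h).
have [s [m [vs Hcs Hm]]] :=
  @response_le_val i c'' sigma' (fun j _ => valid_strategy_prefix pre (Hv j)).
set sd := deviate pre (c'' i) s (sigma i).
have vsd : valid_strategy i sd.
  by apply: deviate_valid => //; apply: (forallP (dev_step Hdev) i).
have Hh2 : hist (upd sigma i sd) c_src k.+1 = rcons pre c''.
  by apply: hist_deviate => j ji; rewrite (dev_others Hdev ji).
have Hcont j x h : upd sigma' i s j (x :: h) = upd sigma i sd j (pre ++ x :: h).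
  rewrite /upd; case: eqP => // _; rewrite /sd /deviate.
  have ne : pre ++ x :: h != pre by apply/eqP => /(congr1 size); rewrite size_cat /=; lia.
  by rewrite (negbTE ne) take_size_cat // eqxx drop_size_cat.
have vsd2 : valid_strategy i (upd sigma i sd i) by rewrite /upd eqxx.
have := HNE i sd vsd.
rewrite (cost_continue vsd2 Hh2 Hcont) Hcs (cost_between_rcons_hist i Hh2).
rewrite cost_play (run_cost_tgt (play_follows _ (Hv i)) HT) (@cost_between_split _ _ 0 k T) //.
rewrite -EFinD -!natrD lee_fin ler_nat -addnA leq_add2l => H.
by apply: le_trans (leeD2l _ Hm); rewrite -EFinD -natrD lee_fin ler_nat.
Qed.

(* The b-components of the vertices of G_NE along the run [rho]. *)
Fixpoint budget rho (k : nat) : 'I_n -> \bar R :=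
  if k is k'.+1 then fun i =>
    Order.min (budget rho k' i - ((tcost (rho k') (rho k'.+1) i)%:R)%:E)%E
      (\big[Order.min/+oo%E]_(c'' in dev i (rho k') (rho k'.+1))
         (((tcost (rho k') c'' i)%:R)%:E + value i c''
            - ((tcost (rho k') (rho k'.+1) i)%:R)%:E)%E)
  else fun _ => +oo%E.

Lemma budgetS rho k i : budget rho k.+1 i =
  Order.min (budget rho k i - ((tcost (rho k) (rho k.+1) i)%:R)%:E)%E
    (\big[Order.min/+oo%E]_(c'' in dev i (rho k) (rho k.+1))
       (((tcost (rho k) c'' i)%:R)%:E + value i c'' - ((tcost (rho k) (rho k.+1) i)%:R)%:E)%E).
Proof. by []. Qed.

Lemma gpath_of_seq (gamma : 'I_n -> R) (xs : nat -> vertex A n R) (zs : nat -> R) T :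
  (forall k, (k < T)%N -> Gedge gamma (xs k) (zs k) (xs k.+1)) ->
  gpath gamma (xs 0%N) (xs T) (\sum_(0 <= k < T) zs k).
Proof.
elim: T xs zs => [|T IH] xs zs H; first by rewrite big_geq //; apply: gpath_nil.
rewrite big_nat_recl //; apply: gpath_cons (H 0%N isT) _.
by apply: (IH (fun k => xs k.+1) (fun k => zs k.+1)) => k kT; apply: H.
Qed.

Lemma seq_of_gpath (gamma : 'I_n -> R) x y q : gpath gamma x y q ->
  exists T (xs : nat -> vertex A n R) (zs : nat -> R),
  [/\ xs 0%N = x, xs T = y, forall k, (k < T)%N -> Gedge gamma (xs k) (zs k) (xs k.+1)
    & q = \sum_(0 <= k < T) zs k].
Proof.
elim=> [x0|x0 y0 t z p He _ [T [xs [zs [H0 HT Hs Hq]]]]].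
  by exists 0%N, (fun _ => x0), (fun _ => 0); split => //; rewrite big_geq.
exists T.+1, (fun k => if k is k'.+1 then xs k' else x0),
  (fun k => if k is k'.+1 then zs k' else z); split => //.
  by case => [_|k] /=; [rewrite H0 | rewrite ltnS => /Hs].
by rewrite big_nat_recl // Hq.
Qed.

Definition nat_diff_or_oo (x : \bar R) := x = +oo%E \/ exists a b : nat, x = (a%:R - b%:R)%:E.

Lemma budget_nat_diff rho k i : nat_diff_or_oo (budget rho k i).
Proof.
have min_closed x y : nat_diff_or_oo x -> nat_diff_or_oo y -> nat_diff_or_oo (Order.min x y).
  by move=> Hx Hy; rewrite minEle; case: ifP.
elim: k => [|k IH]; first by left.
rewrite budgetS; apply: (min_closed).
  case: IH => [->|[a [b ->]]]; first by left.
  right; exists a, (b + tcost (rho k) (rho k.+1) i)%N.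
  by rewrite -EFinD natrD opprD addrA.
apply: (big_ind nat_diff_or_oo); [by left | exact: min_closed | move=> c'' _].
have [M [-> _]] := val_nat i c''.
right; exists (tcost (rho k) c'' i + M)%N, (tcost (rho k) (rho k.+1) i).
by rewrite -EFinD natrD.
Qed.

Lemma nat_diff_inB (x : \bar R) M : nat_diff_or_oo x -> (0%R <= x)%E ->
  (x <= (M%:R)%:E)%E -> (M <= Y)%N -> inB A n x.
Proof.
move=> [->|[a [b ->]]] H0 HM HY; first by left.
move: H0 HM; rewrite !lee_fin subr_ge0 ler_nat => ba.
rewrite -natrB // ler_nat => HM; right; exists (a - b)%N; split => //.
exact: leq_trans HM HY.
Qed.

Lemma NE_budget sigma T : NashEq R sigma ->
  let rho := play sigma c_src in
  (forall i, rho T i = tgt) -> forall k, (k <= T)%N -> forall i,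
  inB A n (budget rho k i) /\ (((cost_between rho i k T)%:R)%:E <= budget rho k i)%E.
Proof.
move=> HNE rho HT; elim=> [|k IH] kT i; first by split; [left | exact: leey].
have [_ L] := IH (ltnW kT) i.
have Hs : cost_between rho i k T = (tcost (rho k) (rho k.+1) i + cost_between rho i k.+1 T)%N.
  by rewrite (@cost_between_split _ _ k k.+1 T) ?leqnSn // /cost_between big_nat1.
have low : (((cost_between rho i k.+1 T)%:R)%:E <= budget rho k.+1 i)%E.
  rewrite budgetS le_min; apply/andP; split.
    by rewrite leeBrDr // -EFinD -natrD addnC -Hs.
  apply: le_bigmin; first exact: leey.
  move=> c'' Hd; rewrite leeBrDr //.
  by have := NE_deviation_bound HNE Hd (ltnW kT) (HT i); rewrite -/rho Hs natrD EFinD addeC.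
split => //.
have [M [HvM HMY]] := val_nat i (rho k.+1).
apply: (nat_diff_inB (budget_nat_diff rho k.+1 i) _ _ HMY).
  by apply: le_trans low; rewrite lee_fin.
have Hin : rho k.+1 \in dev i (rho k) (rho k.+1).
  rewrite inE; apply/andP; split; last by apply/forallP => j; apply/implyP.
  by apply/forallP => j; apply: (play_follows _ (proj1 HNE j)).
rewrite budgetS ge_min; apply/orP; right; apply: le_trans (bigmin_le_cond _ _ Hin) _.
by rewrite HvM -EFinD addrC addrK.
Qed.

Lemma social_cost_run (gamma : 'I_n -> R) sigma T : valid_profile sigma ->
  (forall i, play sigma c_src T i = tgt) ->
  social_cost gamma sigma =
    (\sum_(0 <= k < T) \sum_(i < n) gamma i * (stage_cost (play sigma c_src) k i)%:R)%:E.
Proof.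
move=> Hv HT; rewrite /social_cost.
under eq_bigr => i _ do rewrite cost_play (run_cost_tgt (play_follows _ (Hv i)) (HT i)) -EFinM.
rewrite sumEFin exchange_big; congr EFin; apply: eq_bigr => i _.
by rewrite /cost_between natr_sum mulr_sumr.
Qed.

Lemma NE_gpath (gamma : 'I_n -> R) sigma : NashEq R sigma -> exists b p,
  gpath gamma (c_src, fun _ => +oo%E) (c_tgt, b) p /\ p%:E = social_cost gamma sigma.
Proof.
move=> HNE; have [T HT] := NE_reaches_tgt HNE; set rho := play sigma c_src.
exists (budget rho T), (\sum_(0 <= k < T) \sum_(i < n) gamma i * (stage_cost rho k i)%:R).
rewrite (social_cost_run _ (proj1 HNE) HT); split => //.
have -> : c_tgt = rho T by apply/ffunP => i; rewrite ffunE HT.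
apply: (gpath_of_seq (xs := fun k => (rho k, budget rho k))) => k kT; split => //=.
- by move=> i; case: (NE_budget HNE HT (ltnW kT) i).
- by move=> i; case: (NE_budget HNE HT kT i).
- by apply/forallP => i; apply: (play_follows _ (proj1 HNE i)).
Qed.

(** * From paths of G_NE to Nash equilibria *)

Lemma Gedge_budget_step (gamma : 'I_n -> R) (x y : vertex A n R) z i : Gedge gamma x z y ->
  (y.2 i <= x.2 i - ((tcost x.1 y.1 i)%:R)%:E)%E.
Proof. by case=> _ _ _ _ ->; rewrite ge_min lexx. Qed.

Lemma Gedge_budget_dev (gamma : 'I_n -> R) (x y : vertex A n R) z i c'' : Gedge gamma x z y ->
  c'' \in dev i x.1 y.1 ->
  (y.2 i <= ((tcost x.1 c'' i)%:R)%:E + value i c'' - ((tcost x.1 y.1 i)%:R)%:E)%E.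
Proof.
case=> _ _ _ _ -> Hd; rewrite ge_min; apply/orP; right.
exact: (bigmin_le_cond _ _ Hd).
Qed.

Lemma inB_ge0 (x : \bar R) : inB A n x -> (0%R <= x)%E.
Proof. by case=> [->|[k [_ ->]]]; [exact: leey | rewrite lee_fin ler0n]. Qed.

Lemma gpath_deviation_bound (gamma : 'I_n -> R) T (xs : nat -> vertex A n R) zs rho k i c'' :
  (forall k, (k < T)%N -> Gedge gamma (xs k) (zs k) (xs k.+1)) ->
  (forall t, (t <= T)%N -> rho t = (xs t).1) -> (k < T)%N ->
  c'' \in dev i (rho k) (rho k.+1) ->
  (((cost_between rho i k T)%:R)%:E <= ((tcost (rho k) c'' i)%:R)%:E + value i c'')%E.
Proof.
move=> Hs Hr kT Hd; have [M [HvM _]] := val_nat i c''.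
set D : R := (tcost (rho k) c'' i)%:R + M%:R.
(* Along the path the budget of [i] drops by her stage costs and it never becomes negative. *)
have budget_le t : (k < t <= T)%N -> ((xs t).2 i <= (D - (cost_between rho i k t)%:R)%:E)%E.
  elim: t => // t IH /andP[]; rewrite ltnS => kt tT.
  rewrite (cost_betweenSr _ _ kt) /stage_cost !Hr ?(ltnW tT) // natrD opprD addrA.
  have [<-|kt'] := eqVneq k t.
    have Hd' : c'' \in dev i (xs k).1 (xs k.+1).1 by rewrite -!Hr ?(ltnW kT).
    apply: le_trans (Gedge_budget_dev (Hs _ kT) Hd') _.
    by rewrite HvM /D Hr ?(ltnW kT) // /cost_between big_geq // subr0 EFinB EFinD.
  apply: le_trans (Gedge_budget_step _ (Hs _ tT)) _; rewrite EFinB leeB //.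
  by apply: IH; rewrite ltn_neqAle kt' kt ltnW.
have TT : (T.-1 < T)%N by rewrite ltn_predL (leq_ltn_trans _ kT).
have [_ HB _ _ _] := Hs _ TT; rewrite prednK ?(leq_ltn_trans _ kT) // in HB.
have /budget_le le_T : (k < T <= T)%N by rewrite kT leqnn.
have := le_trans (inB_ge0 (HB i)) le_T.
by rewrite lee_fin subr_ge0 HvM -EFinD lee_fin.
Qed.

Definition first_dev rho (h : history) :=
  find (fun t => nth c_src h t != rho t) (iota 0 (size h)).

(* The test [t < size h] holds whenever [h] has left [rho]; it only eases the validity proof. *)
Definition follow_or_punish rho : profile := fun j h =>
  let t := first_dev rho h in
  if h == mkseq rho (size h) then rho (size h) j
  else match [pick i0 | nth c_src h t i0 != rho t i0] with
    | Some i0 => if (j != i0) && (t < size h)%N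
                 then punisher i0 (nth c_src h t) j (drop t h)
                 else toward_tgt (last c_src h j)
    | None => toward_tgt (last c_src h j)
    end.

Lemma follow_or_punish_valid rho : (forall k, step (rho k) (rho k.+1)) ->
  valid_profile (follow_or_punish rho).
Proof.
move=> Hs j x h; rewrite /follow_or_punish; set t := first_dev rho (x :: h).
have last_xh : last x h = last c_src (x :: h) by [].
case: ifP => [/eqP E|_].
  have -> : last x h = rho (size h).
    by rewrite last_xh E (_ : size _ = (size h).+1) // mkseqS last_rcons.
  exact: (forallP (Hs (size h)) j).
case: pickP => [i0 _|_]; last exact: arc_toward_tgt.
case: ifP => [/andP[ji tsz]|_]; last exact: arc_toward_tgt.
have [vpi _] := punisherP i0 (nth c_src (x :: h) t).
have := vpi j ji (nth c_src (x :: h) t) (drop t.+1 (x :: h)).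
by rewrite -(drop_nth c_src tsz) last_xh -(last_drop _ tsz) (drop_nth c_src tsz).
Qed.

Lemma hist_follow_or_punish rho k : rho 0%N = c_src ->
  hist (follow_or_punish rho) c_src k = mkseq rho k.+1.
Proof.
move=> H0; elim: k => [|k IH]; first by rewrite /mkseq /= H0.
rewrite /= IH [in RHS]mkseqS; congr rcons.
by apply/ffunP => j; rewrite ffunE /follow_or_punish size_mkseq eqxx.
Qed.

Lemma play_follow_or_punish rho : rho 0%N = c_src -> play (follow_or_punish rho) c_src = rho.
Proof.
by move=> H0; apply: funext => t; rewrite /play hist_follow_or_punish // mkseqS last_rcons.
Qed.

Lemma follow_or_punish_punishes rho k i c'' :
  c'' i != rho k.+1 i -> (forall j, j != i -> c'' j = rho k.+1 j) ->
  forall j h, j != i ->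
  follow_or_punish rho j (mkseq rho k.+1 ++ c'' :: h) = punisher i c'' j (c'' :: h).
Proof.
move=> Hci Hothers j h ji; rewrite /follow_or_punish.
set H := mkseq rho k.+1 ++ c'' :: h.
have szH : size H = (k.+2 + size h)%N by rewrite /H size_cat size_mkseq /=; lia.
have nthk : nth c_src H k.+1 = c'' by rewrite /H nth_cat size_mkseq ltnn subnn.
have -> : (H == mkseq rho (size H)) = false.
  apply/negbTE/eqP => E; move: Hci; rewrite -nthk {1}E nth_mkseq ?eqxx //.
  by rewrite szH; lia.
have -> : first_dev rho H = k.+1.
  apply: find_iota; [by rewrite szH; lia | by rewrite nthk; apply: contra Hci => /eqP ->|].
  move=> t tk; rewrite /H nth_cat size_mkseq tk nth_mkseq ?eqxx //.
rewrite nthk; case: pickP => [i0 Hi0|/(_ i)]; last by rewrite Hci.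
have -> : i0 = i by apply: contraTeq Hi0 => i0i; rewrite Hothers // eqxx.
have -> : (k.+1 < size H)%N by rewrite szH; lia.
by rewrite ji /H drop_size_cat ?size_mkseq.
Qed.

Lemma first_deviation sigma i s : valid_profile sigma -> valid_strategy i s ->
  let rho := play sigma c_src in let rho' := play (upd sigma i s) c_src in
  rho' = rho \/ exists k,
  [/\ hist (upd sigma i s) c_src k.+1 = rcons (hist sigma c_src k) (rho' k.+1),
    rho' k.+1 \in dev i (rho k) (rho k.+1) & rho' k.+1 i != rho k.+1 i].
Proof.
move=> Hv vs rho rho'.
case: (pselect (exists t, rho' t != rho t)) => [ex|nex]; last first.
  by left; apply: funext => t; apply/eqP/negPn/negP => H; apply: nex; exists t.
right; case: (ex_minnP ex) => -[|k] Hd Hmin; first by rewrite eqxx in Hd.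
have Hh : hist (upd sigma i s) c_src k = hist sigma c_src k.
  rewrite !hist_mkseq; apply/eq_in_map => t; rewrite mem_iota => /andP[_ tk].
  by apply/eqP; apply: contraTT tk => /Hmin; rewrite -leqNgt.
have Hk : rho' k = rho k by rewrite /rho' /rho /play Hh.
have others j : j != i -> rho' k.+1 j = rho k.+1 j.
  by move=> ji; rewrite /rho' /rho !playS !ffunE Hh /upd (negbTE ji).
have Hi : rho' k.+1 i != rho k.+1 i.
  apply: contra Hd => /eqP E; apply/eqP/ffunP => j.
  by case: (eqVneq j i) => [->|/others].
exists k; split => //; first by rewrite /= /rho' playS Hh.
rewrite inE; apply/andP; split; apply/forallP => j; last first.
  by apply/implyP => /others ->.
have [->|ji] := eqVneq j i.
  by rewrite -Hk; apply: play_follows; rewrite /upd eqxx.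
by rewrite others //; apply: play_follows.
Qed.

Lemma punished_deviation_cost rho i s k c'' :
  rho 0%N = c_src -> valid_strategy i s ->
  hist (upd (follow_or_punish rho) i s) c_src k.+1 = rcons (mkseq rho k.+1) c'' ->
  c'' \in dev i (rho k) (rho k.+1) -> c'' i != rho k.+1 i ->
  (((cost_between rho i 0 k + tcost (rho k) c'' i)%N%:R)%:E + value i c''
     <= cost i (upd (follow_or_punish rho) i s) c_src)%E.
Proof.
move=> H0 vs Hh Hdev Hi; set sigma := follow_or_punish rho.
set pre := mkseq rho k.+1 in Hh *.
pose s' : strategy := fun h => s (pre ++ h).
have Hpre : hist sigma c_src k = pre by rewrite hist_follow_or_punish.
have vs2 : valid_strategy i (upd sigma i s i) by rewrite /upd eqxx.
rewrite (cost_continue (sigma' := fun j h => upd sigma i s j (pre ++ h)) vs2 Hh) //.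
rewrite -Hpre in Hh.
rewrite (cost_between_rcons_hist i Hh) play_follow_or_punish // leeD2l //.
rewrite (@eq_cost _ (upd (punisher i c'') i s') c'' i).
  exact: (proj2 (punisherP i c'')) _ (valid_strategy_prefix pre vs).
move=> j h; rewrite /upd; case: eqP => [//|/eqP ji].
by apply: follow_or_punish_punishes => // j' /(dev_others Hdev).
Qed.

Lemma follow_or_punish_NE rho T :
  rho 0%N = c_src -> (forall k, step (rho k) (rho k.+1)) -> (forall i, rho T i = tgt) ->
  (forall i k c'', (k < T)%N -> c'' \in dev i (rho k) (rho k.+1) ->
     (((cost_between rho i k T)%:R)%:E <= ((tcost (rho k) c'' i)%:R)%:E + value i c'')%E) ->
  NashEq R (follow_or_punish rho).
Proof.
move=> H0 Hstep HT Hbound; set sigma := follow_or_punish rho.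
have Hv : valid_profile sigma := follow_or_punish_valid Hstep.
have Hplay : play sigma c_src = rho := play_follow_or_punish H0.
have Hf i : follows i rho by move=> t; apply: (forallP (Hstep t) i).
split => // i s vs; case: (first_deviation Hv vs) => [E|[k [Hh Hdev Hi]]].
  by rewrite !cost_play E.
rewrite Hplay in Hdev Hi; rewrite [hist sigma _ _]hist_follow_or_punish // in Hh.
set c'' := play (upd sigma i s) c_src k.+1 in Hh Hdev Hi *.
have kT : (k < T)%N.
  rewrite ltnNge; apply/negP => Tk; move: Hi.
  have /forallP/(_ i) := dev_step Hdev; rewrite (follows_tgt (Hf i) (HT i) Tk).
  by move=> /arc_tgt ->; rewrite (follows_tgt (Hf i) (HT i)) ?eqxx // leqW.
apply: le_trans (punished_deviation_cost H0 vs Hh Hdev Hi).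
rewrite cost_play Hplay (run_cost_tgt (Hf i) (HT i)) (@cost_between_split _ _ 0 k T) ?(ltnW kT) //.
by rewrite !natrD !EFinD -addeA leeD2l // Hbound.
Qed.

Lemma gpath_NE (gamma : 'I_n -> R) b q :
  gpath gamma (c_src, fun _ => +oo%E) (c_tgt, b) q ->
  exists sigma, NashEq R sigma /\ social_cost gamma sigma = q%:E.
Proof.
move=> /seq_of_gpath [T [xs [zs [H0 HT Hs Hq]]]].
pose rho t := (xs (minn t T)).1.
have Hr t : (t <= T)%N -> rho t = (xs t).1 by move=> tT; rewrite /rho (minn_idPl tT).
have HrT t : (T <= t)%N -> rho t = c_tgt by move=> tT; rewrite /rho (minn_idPr tT) HT.
have Hr0 : rho 0%N = c_src by rewrite Hr // H0.
have HTi i : rho T i = tgt by rewrite HrT // ffunE.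
have Hstep k : step (rho k) (rho k.+1).
  case: (ltnP k T) => kT; first by rewrite !Hr ?(ltnW kT) //; case: (Hs k kT).
  by rewrite !HrT ?(leqW kT) //; apply/forallP => j; rewrite ffunE; apply: arc_tgt_tgt.
have Hne := follow_or_punish_NE Hr0 Hstep HTi
  (fun i k c'' kT Hd => gpath_deviation_bound Hs Hr kT Hd).
exists (follow_or_punish rho); split => //.
rewrite (social_cost_run _ (proj1 Hne) (T := T)) play_follow_or_punish // Hq; congr EFin.
apply: eq_big_nat => k /andP[_ kT]; case: (Hs k kT) => _ _ _ -> _.
by apply: eq_bigr => i _; rewrite /stage_cost !Hr // ltnW.
Qed.

(** * Existence of equilibria: Rosenthal's potential *)

Definition route_profile := 'I_n -> nat -> V.

Definition configs (p : route_profile) t : config := [ffun j => p j t].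

Definition valid_routes (p : route_profile) := forall j,
  [/\ p j 0%N = src A, forall t, arc (p j t) (p j t.+1) & exists K, p j K = tgt].

Definition edge_potential (u v : V) m := (\sum_(k < m) lcost u v k.+1)%N.

Definition edge_load (p : route_profile) t (u v : V) :=
  #|[set j | (p j t == u) && (p j t.+1 == v)]|.

Definition edge_load_others (p : route_profile) i t (u v : V) :=
  #|[set j | (j != i) && (p j t == u) && (p j t.+1 == v)]|.

Definition step_potential (p : route_profile) t :=
  (\sum_(u : V) \sum_(v : V) edge_potential u v (edge_load p t u v))%N.

Definition potential (p : route_profile) H := (\sum_(0 <= t < H) step_potential p t)%N.

Lemma edge_load_split p i t (u v : V) :
  edge_load p t u v = (((p i t == u) && (p i t.+1 == v)) + edge_load_others p i t u v)%N.
Proof.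
rewrite /edge_load (cardD1 i) inE; congr (_ + _)%N.
by apply: eq_card => j; rewrite !inE andbA.
Qed.

Lemma edge_potential_add (u v : V) m (b : bool) :
  edge_potential u v (b + m) = (edge_potential u v m + (if b then lcost u v m.+1 else 0))%N.
Proof. by case: b; rewrite ?addn0 // add1n /edge_potential big_ord_recr. Qed.

Lemma step_potential_split p i t : step_potential p t =
  ((\sum_(u : V) \sum_(v : V) edge_potential u v (edge_load_others p i t u v))
    + stage_cost (configs p) t i)%N.
Proof.
rewrite /step_potential.
under eq_bigr do under eq_bigr do rewrite (edge_load_split _ i) edge_potential_add.
under eq_bigr do rewrite big_split /=.
rewrite big_split /=; congr (_ + _)%N.
rewrite (bigD1 (p i t)) //= [X in (_ + X)%N]big1 ?addn0; last first.
  by move=> u nu; apply: big1 => v _; rewrite eq_sym (negbTE nu).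
rewrite (bigD1 (p i t.+1)) //= !eqxx [X in (_ + X)%N]big1 ?addn0; last first.
  by move=> v nv; rewrite eq_sym (negbTE nv).
rewrite /stage_cost /tcost !ffunE; congr lcost.
apply/esym; rewrite /load (cardD1 i) mem_classic_set !ffunE !eqxx /= add1n; congr _.+1.
by apply: eq_card => j; rewrite !inE mem_classic_set !ffunE andbA.
Qed.

Lemma potential_deviation p p' i H : (forall j, j != i -> p j = p' j) ->
  (potential p' H + cost_between (configs p) i 0 H =
     potential p H + cost_between (configs p') i 0 H)%N.
Proof.
move=> Hj; rewrite /potential /cost_between -!big_split /=; apply: eq_bigr => t _.
rewrite (step_potential_split p' i) (step_potential_split p i).
have same_load u v : edge_load_others p' i t u v = edge_load_others p i t u v.
  by apply: eq_card => j; rewrite !inE; case: (eqVneq j i) => //= ji; rewrite Hj.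
under [in LHS]eq_bigr do under eq_bigr do rewrite same_load.
lia.
Qed.

Lemma step_potential_tgt p t : (forall j, p j t = tgt) -> (forall j, p j t.+1 = tgt) ->
  step_potential p t = 0%N.
Proof.
move=> H1 H2; apply: big1 => u _; apply: big1 => v _; rewrite /edge_potential.
have [->|nu] := eqVneq u tgt.
  have [->|nv] := eqVneq v tgt; first by apply: big1 => k _; apply: lcost_tgt.
  suff -> : edge_load p t tgt v = 0%N by rewrite big_ord0.
  apply/eqP; rewrite cards_eq0; apply/eqP/setP => j; rewrite !inE H2.
  by rewrite [tgt == v]eq_sym (negbTE nv) andbF.
suff -> : edge_load p t u v = 0%N by rewrite big_ord0.
apply/eqP; rewrite cards_eq0; apply/eqP/setP => j; rewrite !inE H1.
by rewrite [tgt == u]eq_sym (negbTE nu).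
Qed.

Lemma potential_stable p H H' : valid_routes p -> (forall j, p j H = tgt) -> (H <= H')%N ->
  potential p H' = potential p H.
Proof.
move=> vp HH HH'; rewrite /potential (big_cat_nat (leq0n H) HH') /=.
rewrite [X in (_ + X)%N]big1_seq ?addn0 // => t /andP[_]; rewrite mem_index_iota => /andP[Ht _].
have at_tgt j m : (H <= m)%N -> p j m = tgt.
  by have [_ arcs _] := vp j; apply: (tgt_absorbing arcs (HH j)).
by apply: step_potential_tgt => j; apply: at_tgt => //; apply: leqW.
Qed.

Lemma routes_follow p i : valid_routes p -> follows i (configs p).
Proof. by move=> vp t; rewrite !ffunE; have [_ arcs _] := vp i; apply: arcs. Qed.

Definition follow_routes (p : route_profile) : profile := fun j h =>
  if last c_src h j == p j (size h).-1 then p j (size h) else toward_tgt (last c_src h j).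

Lemma follow_routes_valid p : valid_routes p -> valid_profile (follow_routes p).
Proof.
move=> vp j x h; rewrite /follow_routes /=; case: ifP => [/eqP E|_]; last exact: arc_toward_tgt.
by rewrite -[last x h]/(last c_src (x :: h)) E /=; have [_ arcs _] := vp j; apply: arcs.
Qed.

Lemma play_follow_routes_others p i s : valid_routes p ->
  forall t j, j != i -> play (upd (follow_routes p) i s) c_src t j = p j t.
Proof.
move=> vp; elim=> [|t IH] j ji; first by rewrite /play /= ffunE; have [-> _ _] := vp j.
rewrite playS ffunE /upd (negbTE ji) /follow_routes last_hist IH //.
by rewrite size_hist /= eqxx.
Qed.

Lemma play_follow_routes p : valid_routes p -> play (follow_routes p) c_src = configs p.
Proof.
move=> vp; apply: funext; elim=> [|t IH].
  by apply/ffunP => j; rewrite /play /= !ffunE; have [-> _ _] := vp j.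
apply/ffunP => j; rewrite playS !ffunE /follow_routes last_hist IH size_hist /= ffunE eqxx.
by [].
Qed.

Lemma potential_minimizer : exists p H,
  [/\ valid_routes p, forall j, p j H = tgt &
      forall p' H', valid_routes p' -> (forall j, p' j H' = tgt) ->
        (potential p H <= potential p' H')%N].
Proof.
pose p0 : route_profile := fun j t => iter t toward_tgt (src A).
have p0_tgt j : p0 j #|V| = tgt by apply: iter_toward_tgt => t; rewrite /p0 iterS.
have vp0 : valid_routes p0.
  by move=> j; split => //; [move=> t; rewrite /p0 iterS; apply: arc_toward_tgt | exists #|V|].
pose P m := `[< exists p H, [/\ valid_routes p, forall j, p j H = tgt & potential p H = m] >].
have P0 : P (potential p0 #|V|) by apply/asboolP; exists p0, #|V|.
have [m /asboolP [p [H [vp HH <-]]] Hmin] := ex_minnP (ex_intro P _ P0).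
exists p, H; split => // p' H' vp' HH'.
by apply: Hmin; apply/asboolP; exists p', H'.
Qed.

Lemma NE_exists : exists sigma, NashEq R sigma.
Proof.
have [p [H [vp HH Hmin]]] := potential_minimizer.
exists (follow_routes p); split => [|i s vs]; first exact: follow_routes_valid.
set rho' := play (upd (follow_routes p) i s) c_src.
have Hv' : follows i rho' by apply: play_follows; rewrite /upd eqxx.
case: (pselect (exists K, rho' K i == tgt)) => [[K /eqP HK]|nK]; last first.
  rewrite [X in (_ <= X)%E]cost_play run_cost_never ?leey // => K.
  by apply/negP => HK; apply: nK; exists K.
pose p' : route_profile := fun j => if j == i then (fun t => rho' t i) else p j.
have Hp' : rho' = configs p'.
  apply: funext => t; apply/ffunP => j; rewrite ffunE /p'.
  by case: (eqVneq j i) => [->//|ji]; rewrite play_follow_routes_others.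
have vp' : valid_routes p'.
  move=> j; rewrite /p'; case: (eqVneq j i) => [_|ji] /=; last exact: vp j.
  by split; [rewrite /rho' /play /= ffunE | exact: Hv' | exists K].
pose H' := maxn H K.
have HpH' j : p j H' = tgt.
  by have [_ arcs _] := vp j; apply: (tgt_absorbing arcs (HH j)); rewrite leq_maxl.
have Hp'H' j : p' j H' = tgt.
  rewrite /p'; case: (eqVneq j i) => [_|ji] /=; last exact: HpH'.
  by apply: (follows_tgt Hv' HK); rewrite leq_maxr.
have Hle : (potential p H' <= potential p' H')%N.
  by rewrite (potential_stable vp HH (leq_maxl H K)); apply: Hmin.
have off_i j : j != i -> p j = p' j by move=> ji; rewrite /p' (negbTE ji).
have := potential_deviation H' off_i.
rewrite !cost_play play_follow_routes // -/rho' Hp'.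
rewrite (run_cost_tgt (routes_follow i vp) (K := H')) ?ffunE ?HpH' //.
rewrite (run_cost_tgt (routes_follow i vp') (K := H')) ?ffunE ?Hp'H' //.
by rewrite lee_fin ler_nat; lia.
Qed.

Local Notation cost_vector := {ffun 'I_n -> 'I_Y.+1}.

Definition has_costs sigma (f : cost_vector) :=
  forall i, cost i sigma c_src = (((f i : nat))%:R)%:E.

Lemma NE_cost_vector sigma : NashEq R sigma -> exists f, has_costs sigma f.
Proof.
move=> HNE; have [m Hm] := fin_all_exists (fun i => NE_cost_le i HNE).
by exists [ffun i => Ordinal (proj2 (Hm i) : (m i < Y.+1)%N)] => i; rewrite ffunE; case: (Hm i).
Qed.

Lemma social_cost_has_costs (gamma : 'I_n -> R) sigma f : has_costs sigma f ->
  social_cost gamma sigma = (\sum_(i < n) gamma i * ((f i : nat))%:R)%:E.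
Proof.
by move=> Hf; rewrite /social_cost; under eq_bigr do rewrite Hf -EFinM; rewrite sumEFin.
Qed.

Lemma minimal_NE_exists (gamma : 'I_n -> R) : exists sigma, minimal_NE gamma sigma.
Proof.
pose P (f : cost_vector) := `[< exists sigma, NashEq R sigma /\ has_costs sigma f >].
pose G (f : cost_vector) := \sum_(i < n) gamma i * ((f i : nat))%:R.
have [sigma0 H0] := NE_exists; have [f0 Hf0] := NE_cost_vector H0.
have P0 : P f0 by apply/asboolP; exists sigma0.
case: (arg_minP G P0) => f /asboolP [sigma [Hs Hc]] Hmin.
exists sigma; split => // s' Hs'; have [f' Hf'] := NE_cost_vector Hs'.
rewrite (social_cost_has_costs gamma Hc) (social_cost_has_costs gamma Hf') lee_fin.
by apply/Hmin/asboolP; exists s'.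
Qed.

End DynamicNCG.

Theorem mainTheorem6 (R : realType) (A : arena) (n : nat) (gamma : 'I_n -> R) :
  exists (p : R) (sigma : profile A n),
    [/\ exists b, gpath gamma (c_src A n, fun _ => +oo%E) (c_tgt A n, b) p,
        forall b q, gpath gamma (c_src A n, fun _ => +oo%E) (c_tgt A n, b) q -> p <= q,
        minimal_NE gamma sigma &
        p%:E = social_cost gamma sigma].
Proof.
have [sigma [Hne Hmin]] := minimal_NE_exists A gamma.
have [b [p [Hp Hsc]]] := NE_gpath gamma Hne.
exists p, sigma; split => //; first by exists b.
move=> b' q /gpath_NE [s' [Hs' Hq]].
by rewrite -lee_fin Hsc -Hq; apply: Hmin.
Qed.
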